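(* Let $\tau$ be a graph on a closed oriented surface which lifts to a triangulation of the universal cover, let $E$ be its set of edges, let $\mathbf{c}:E\to\mathbb{R}$, and let $v$ be a vertex of $\tau$ of valence $m$. With $x_i$, $A_i$, $W_j=\begin{pmatrix}a_j&b_j\\c_j&d_j\end{pmatrix}$ as in the context, the following are equivalent: (A) $W_m=-I$, and $a_j<0$, $c_j<0$, $b_j>0$, $d_j>0$ for $1\le j\le m-1$ except that $a_1=0$ and $d_{m-1}=0$; (B) $W_m=-I$, and $a_j\le 0$, $c_j\le 0$, $b_j\ge 0$, $d_j\ge 0$ for $1\le j\le m-1$ except that $a_1=0$ and $d_{m-1}=0$.
   Context: List the edge-ends incident to $v$ in clockwise order (with respect to the orientation of the surface) as $e_1,\dots,e_m$, an edge with both endpoints at $v$ contributing two entries. Set $x_i=\mathbf{c}(e_i)$, $A_i=\begin{pmatrix}0&1\\-1&x_i\end{pmatrix}$, $W_j=A_1A_2\cdots A_j=\begin{pmatrix}a_j&b_j\\c_j&d_j\end{pmatrix}$ for $j=1,\dots,m$, and $I$ is the $2\times2$ identity matrix. In both (A) and (B), the phrase ''except that $a_1=0$ and $d_{m-1}=0$'' means the sign conditions are not imposed on $a_1$ and $d_{m-1}$, which equal $0$. *)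

From mathcomp Require Import all_boot all_order all_algebra.
Set Implicit Arguments. Unset Strict Implicit. Unset Printing Implicit Defensive.
Import Order.TTheory GRing.Theory Num.Theory.
Local Open Scope ring_scope.

Definition Amx (R : ringType) (x : R) : 'M[R]_2 :=
  \matrix_(i < 2, j < 2)
    (if (i == 0 :> nat) then (if (j == 0 :> nat) then 0 else 1)
     else (if (j == 0 :> nat) then -1 else x)).

Definition Wmx (R : ringType) (x : nat -> R) (j : nat) : 'M[R]_2 :=
  \prod_(1 <= i < j.+1) Amx (x i).

Definition entry_a (R : ringType) (M : 'M[R]_2) : R := M 0 0.
Definition entry_b (R : ringType) (M : 'M[R]_2) : R := M 0 1.
Definition entry_c (R : ringType) (M : 'M[R]_2) : R := M 1 0.
Definition entry_d (R : ringType) (M : 'M[R]_2) : R := M 1 1.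

(* Since [A_i] has first column [(0, -1)], the first column of [W_(j+1)] is
   minus the second column of [W_j]: [a_(j+1) = -b_j] and [c_(j+1) = -d_j].
   Moreover [det W_j = 1]. Under the weak sign conditions of (B) the product
   [a_j d_j] is [<= 0], so [b_j c_j = a_j d_j - 1 <= -1] forces [b_j > 0] and
   [c_j < 0] for every [1 <= j <= m-1]. The shift relations then give
   [a_j = -b_(j-1) < 0] for [j >= 2] and [d_j = -c_(j+1) > 0] for [j < m-1]. *)

From mathcomp Require Import all_boot all_order all_algebra.
From mathcomp Require Import zify.

Set Implicit Arguments.
Unset Strict Implicit.
Unset Printing Implicit Defensive.
Import Order.TTheory GRing.Theory Num.Theory.
Local Open Scope ring_scope.

Lemma det_mx22 (R : comPzRingType) (M : 'M[R]_2) :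
  \det M = M 0 0 * M 1 1 - M 0 1 * M 1 0.
Proof.
rewrite (expand_det_row _ 0) !big_ord_recl big_ord0 /cofactor !det_mx11 !mxE /=.
rewrite addr0 expr0 expr1 !mul1r mulN1r mulrN.
by congr (M _ _ * M _ _ - M _ _ * M _ _); apply: val_inj.
Qed.

Lemma det_Amx (R : comNzRingType) (y : R) : \det (Amx y) = 1.
Proof. by rewrite det_mx22 !mxE /= mul0r mulrN1 opprK add0r. Qed.

Lemma mulmx_Amx_col0 (R : nzRingType) (M : 'M[R]_2) (y : R) i :
  (M *m Amx y) i 0 = - M i 1.
Proof.
rewrite !mxE !big_ord_recl big_ord0 !mxE /= mulr0 add0r addr0 mulrN1.
by congr (- M _ _); apply: val_inj.
Qed.

Section ProductMatrices.

Variable R : nzRingType.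
Variable x : nat -> R.

Lemma WmxS j : Wmx x j.+1 = Wmx x j *m Amx (x j.+1).
Proof. by rewrite /Wmx big_nat_recr. Qed.

Lemma entry_a_WmxS j : entry_a (Wmx x j.+1) = - entry_b (Wmx x j).
Proof. by rewrite /entry_a WmxS mulmx_Amx_col0. Qed.

Lemma entry_c_WmxS j : entry_c (Wmx x j.+1) = - entry_d (Wmx x j).
Proof. by rewrite /entry_c WmxS mulmx_Amx_col0. Qed.

End ProductMatrices.

Lemma det_Wmx (R : comNzRingType) (x : nat -> R) j : \det (Wmx x j) = 1.
Proof.
elim: j => [|j IHj]; first by rewrite /Wmx big_geq // det1.
by rewrite WmxS det_mulmx IHj det_Amx mulr1.
Qed.

Lemma det1_offdiag_signs (R : numDomainType) (M : 'M[R]_2) :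
  \det M = 1 -> entry_a M <= 0 -> 0 <= entry_d M ->
  0 <= entry_b M -> entry_c M <= 0 -> 0 < entry_b M /\ entry_c M < 0.
Proof.
rewrite /entry_a /entry_b /entry_c /entry_d => detM a_le0 d_ge0 b_ge0 c_le0.
have bc_lt0 : M 0 1 * M 1 0 < 0.
  have -> : M 0 1 * M 1 0 = M 0 0 * M 1 1 - 1.
    by rewrite -detM det_mx22 opprB addrC subrK.
  by rewrite subr_lt0 (le_lt_trans (mulr_le0_ge0 a_le0 d_ge0)) ?ltr01.
split.
- rewrite lt_def b_ge0 andbT; apply: contraTneq bc_lt0 => ->.
  by rewrite mul0r ltxx.
- rewrite lt_def c_le0 andbT; apply: contraTneq bc_lt0 => <-.
  by rewrite mulr0 ltxx.
Qed.

Theorem lemma3p1 (R : realFieldType) (m : nat) (x : nat -> R) :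
  (Wmx x m = - 1%:M /\
   forall j : nat, (1 <= j <= m.-1)%N ->
     (if j == 1%N then entry_a (Wmx x j) = 0 else entry_a (Wmx x j) < 0) /\
     entry_c (Wmx x j) < 0 /\
     entry_b (Wmx x j) > 0 /\
     (if j == m.-1 then entry_d (Wmx x j) = 0 else entry_d (Wmx x j) > 0))
  <->
  (Wmx x m = - 1%:M /\
   forall j : nat, (1 <= j <= m.-1)%N ->
     (if j == 1%N then entry_a (Wmx x j) = 0 else entry_a (Wmx x j) <= 0) /\
     entry_c (Wmx x j) <= 0 /\
     entry_b (Wmx x j) >= 0 /\
     (if j == m.-1 then entry_d (Wmx x j) = 0 else entry_d (Wmx x j) >= 0)).
Proof.
split=> -[Wm signs]; split=> // j jr.
  have [a_j [c_j [b_j d_j]]] := signs j jr.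
  split; first by case: (j == 1%N) a_j => // /ltW.
  do 2!(split; first exact: ltW).
  by case: (j == m.-1) d_j => // /ltW.
have offdiag_strict k : (1 <= k <= m.-1)%N ->
    0 < entry_b (Wmx x k) /\ entry_c (Wmx x k) < 0.
  move=> /signs[a_k [c_k [b_k d_k]]].
  apply: det1_offdiag_signs (det_Wmx x k) _ _ b_k c_k.
  - by case: (k == 1%N) a_k => // ->.
  - by case: (k == m.-1) d_k => // ->.
have [a_j [_ [_ d_j]]] := signs j jr.
have [b_gt0 c_lt0] := offdiag_strict j jr.
split; [|split=> //; split=> //].
- case: eqP a_j => // j_neq1 _.
  have j_gt0 : (0 < j)%N by lia.
  have /offdiag_strict[b_prev _] : (1 <= j.-1 <= m.-1)%N by lia.
  by rewrite -(prednK j_gt0) entry_a_WmxS oppr_lt0.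
- case: eqP d_j => // j_neq _.
  have /offdiag_strict[_ c_next] : (1 <= j.+1 <= m.-1)%N by lia.
  by rewrite -oppr_lt0 -entry_c_WmxS.
Qed.
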